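(* Let $G=(V,E)$ be a transient, connected, simple, locally finite graph with fixed vertex $o$ and fixed rotor mechanism $(m_x)_{x\in V}$. If $\rho_{\min}$ is a rotor configuration such that $w(\rho_{\min}(x))\le w(x,y)$ for every $x\in V$ and every outgoing edge $(x,y)$ of $x$, then for any $n\geq1$ and any $t\geq n$, \[ \frac{I_t(\rho_{\min},n)}{n}\geq \alpha_G. \]
   Context: For $x\in V$, $\mathcal{E}_x$ is the set of outgoing directed edges $(x,y)$ with $y$ a neighbor of $x$, and $\deg(x)=|\mathcal{E}_x|$. A rotor mechanism is a choice, for each $x$, of a bijection $m_x:\mathcal{E}_x\to\mathcal{E}_x$ with exactly one orbit. A rotor configuration is a map $\rho$ with $\rho(x)\in\mathcal{E}_x$ for each $x$. $\mathcal{G}(x)$ is the expected number of visits to $x$ by simple random walk on $G$ started at $o$; $\alpha_G$ is the probability that simple random walk started at $o$ never returns to $o$. Weight of a directed edge $(x,y)$: writing $(x,y_i):=m_x^i(x,y)$, \[ w(x,y):=\frac{-1}{\deg(x)}\sum_{i=0}^{\deg(x)-1} i\,\frac{\mathcal{G}(y_{i+1})}{\deg(y_{i+1})}. \] Experiment: given an initial rotor configuration $\rho$ and $n\ge1$, define $X_t^{(0)},\dots,X_t^{(n-1)}$ and $\rho_t$ ($t\ge0$) by: $X_0^{(i)}=o$ for all $i$, $\rho_0=\rho$. Let $i_t:=t+1\bmod n$. Particle $i$ has returned to $o$ by time $t$ if $X_t^{(i)}=o$ and $X_s^{(i)}\ne o$ for some $s<t$. If particle $i_t$ has returned to $o$ by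 time $t$, then $\rho_{t+1}=\rho_t$ and all positions stay the same. Otherwise $\rho_{t+1}(x)=m_x(\rho_t(x))$ for $x=X_t^{(i_t)}$ and $\rho_{t+1}(x)=\rho_t(x)$ otherwise; $X_{t+1}^{(i_t)}$ is the target vertex of $\rho_{t+1}(X_t^{(i_t)})$ and $X_{t+1}^{(i)}=X_t^{(i)}$ for $i\ne i_t$. $I_t(\rho,n)$ is the number of particles $i\in\{0,\dots,n-1\}$ that have not returned to $o$ by time $t$. *)

From HB Require Import structures.
From mathcomp Require Import all_boot all_order all_algebra.
From mathcomp Require Import classical_sets reals ereal sequences.
Set Implicit Arguments. Unset Strict Implicit. Unset Printing Implicit Defensive.
Import Order.TTheory GRing.Theory Num.Theory.
Local Open Scope ring_scope.

Section RotorDefs.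
Context {R : realType} {V : eqType}.
(* The graph: nbr x = list of neighbours of x (locally finite). *)
Variables (nbr : V -> seq V) (o : V).

Definition deg (x : V) : nat := size (nbr x).

Definition simple_graph : Prop :=
  (forall x, uniq (nbr x)) /\ (forall x, x \notin nbr x) /\
  (forall x y, (y \in nbr x) = (x \in nbr y)).

Definition connected_graph : Prop :=
  forall x y, exists p : seq V, path (fun a b => b \in nbr a) x p /\ last x p = y.

(* srw_p k y = P_o(X_k = y) for simple random walk started at o
   (uses symmetry of nbr: the predecessors of y are its neighbours). *)
Fixpoint srw_p (k : nat) (y : V) : R :=
  match k with
  | 0 => (y == o)%:R
  | k'.+1 => \sum_(x <- nbr y) srw_p k' x / (deg x)%:R
  end.

(* taboo k y = P_o(X_k = y and X_j <> o for all 0 < j < k). *)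
Fixpoint taboo (k : nat) (y : V) : R :=
  match k with
  | 0 => (y == o)%:R
  | k'.+1 => \sum_(x <- nbr y | (k' == 0%N) || (x != o)) taboo k' x / (deg x)%:R
  end.

Definition return_prob : \bar R := (\sum_(1 <= k <oo) (taboo k o)%:E)%E.

Definition transient : Prop := (return_prob < 1)%E.

Definition alphaG : R := 1 - fine return_prob.

(* Green function: expected number of visits to x by SRW from o
   (finite for transient connected graphs). *)
Definition green (x : V) : R := fine (\sum_(0 <= k <oo) (srw_p k x)%:E)%E.

(* Outgoing edge (x,y) is represented by its target y in nbr x.
   A rotor mechanism m : for each x, m x is a bijection of nbr x with one orbit. *)
Definition rotor_mechanism (m : V -> V -> V) : Prop :=
  forall x,
    (forall y, y \in nbr x -> m x y \in nbr x) /\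
    {in nbr x &, injective (m x)} /\
    (forall y z, y \in nbr x -> z \in nbr x -> exists k, iter k (m x) y = z).

Definition rotor_config (rho : V -> V) : Prop := forall x, rho x \in nbr x.

Definition weight (m : V -> V -> V) (x y : V) : R :=
  - (deg x)%:R^-1 *
    \sum_(0 <= i < deg x)
       i%:R * (green (iter i.+1 (m x) y) / (deg (iter i.+1 (m x) y))%:R).

(* The experiment. A history is the list [X_t; X_{t-1}; ...; X_0] of
   particle-position vectors (particle i at X i). *)
Definition returned (h : seq (nat -> V)) (i : nat) : bool :=
  (head (fun _ => o) h i == o) && has (fun X => X i != o) (behead h).

Fixpoint run (m : V -> V -> V) (rho : V -> V) (n : nat) (t : nat)
  : (V -> V) * seq (nat -> V) :=
  match t with
  | 0 => (rho, [:: fun _ => o])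
  | t'.+1 =>
      let (r, h) := run m rho n t' in
      let i := (t'.+1 %% n)%N in
      let X := head (fun _ => o) h in
      if returned h i then (r, X :: h)
      else
        let x := X i in
        let r' := fun z => if z == x then m x (r x) else r z in
        let X' := fun j => if j == i then r' x else X j in
        (r', X' :: h)
  end.

Definition I_t (m : V -> V -> V) (rho : V -> V) (n t : nat) : nat :=
  count (fun i => ~~ returned (run m rho n t).2 i) (iota 0 n).

End RotorDefs.

From HB Require Import structures.
From mathcomp Require Import all_boot all_order all_algebra.
From mathcomp Require Import classical_sets reals ereal sequences.
From mathcomp Require Import topology normedtype.
From mathcomp Require Import ring lra.
Import Order.TTheory GRing.Theory Num.Theory.
Local Open Scope ring_scope.
Set Implicit Arguments. Unset Strict Implicit. Unset Printing Implicit Defensive.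

(* With h(x) := G(x)/deg(x), consider the potential
     Phi_t := sum_i h(X_t^(i)) + sum_x (w(rho_t(x)) - w(rho_min(x))).
   When a particle at x turns the rotor of x and moves on, Phi drops by exactly
   [x = o]/deg(o): the telescoping shape of w turns the change of the weight into
   -h(new position) + (1/deg x) sum_(y ~ x) h(y), and G is harmonic off o.  In the
   first n steps each particle leaves o once, so Phi_t <= n h(o) - n/deg(o) for
   t >= n; and Phi_t >= (n - I_t) h(o), since returned particles sit at o and
   rho_min minimises w.  Hence n <= I_t G(o), while alpha_G G(o) <= 1 by the
   renewal equation for returns to o. *)

Lemma nneseries_le_bound (R : realType) (u : nat -> R) (B : R) :
  (forall k, 0 <= u k) -> (forall N, \sum_(k < N) u k <= B) ->
  (\sum_(0 <= k <oo) (u k)%:E <= B%:E)%E.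
Proof.
move=> u_ge0 u_le; apply: lime_le.
  by apply: is_cvg_nneseries => k _ _; rewrite lee_fin.
by apply: nearW => N; rewrite sumEFin lee_fin big_mkord.
Qed.

Lemma nneseries_bounded_fin_num (R : realType) (u : nat -> R) (B : R) :
  (forall k, 0 <= u k) -> (forall N, \sum_(k < N) u k <= B) ->
  (\sum_(0 <= k <oo) (u k)%:E)%E \is a fin_num.
Proof.
move=> u_ge0 u_le; rewrite ge0_fin_numE; last first.
  by apply: nneseries_ge0 => k _ _; rewrite lee_fin.
exact: le_lt_trans (nneseries_le_bound u_ge0 u_le) (ltry _).
Qed.

Lemma sum_conv_exchange (R : pzSemiRingType) (a b : nat -> R) N :
  \sum_(k < N) \sum_(j < k.+1) a j * b (k - j)%N =
  \sum_(j < N) a j * \sum_(l < N - j) b l.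
Proof.
elim: N => [|N IH]; first by rewrite !big_ord0.
rewrite big_ord_recr /= IH [RHS]big_ord_recr /= subSnn big_ord1.
rewrite [in LHS]big_ord_recr /= subnn addrA; congr (_ + _).
rewrite -big_split /=; apply: eq_bigr => j _.
by rewrite subSn 1?ltnW // big_ord_recr mulrDr.
Qed.

Lemma renewal_partial_sum_le (R : numDomainType) (a b : nat -> R) N :
  (forall j, 0 <= a j) -> (forall k, 0 <= b k) ->
  (forall k, b k = (k == 0)%:R + \sum_(j < k.+1) a j * b (k - j)%N) ->
  \sum_(k < N) b k <= 1 + (\sum_(j < N) a j) * \sum_(k < N) b k.
Proof.
move=> a_ge0 b_ge0 b_renewal.
rewrite [X in X <= _](_ : _ =
    \sum_(k < N) ((k == 0%N :> nat)%:R + \sum_(j < k.+1) a j * b (k - j)%N)); last first.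
  by apply: eq_bigr => k _; exact: b_renewal.
rewrite big_split /= sum_conv_exchange mulr_suml; apply: lerD.
  case: N => [|N]; first by rewrite big_ord0 ler01.
  by rewrite big_ord_recl big1 ?addr0.
apply: ler_sum => j _; apply: ler_wpM2l => //.
rewrite -!(big_mkord xpredT).
rewrite (@big_cat_nat _ _ _ (N - j) 0 N _ _ (leq0n _) (leq_subr j N)) /= lerDl.
exact: sumr_ge0.
Qed.

Lemma sumr_mul_index_shift (R : pzSemiRingType) (a : nat -> R) d :
  \sum_(0 <= i < d) i%:R * a i.+2 + \sum_(0 <= i < d) a i.+2 =
  \sum_(0 <= i < d) i%:R * a i.+1 + d%:R * a d.+1.
Proof.
rewrite -big_split -big_nat_recr //= big_nat_recl // mul0r add0r.
by apply: eq_bigr => i _; rewrite -natr1 mulrDl mul1r.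
Qed.

Lemma big_traject (T R : Type) (idx : R) (op : Monoid.law idx) (g : T -> T)
    (h : T -> R) x k :
  \big[op/idx]_(z <- traject g x k) h z = \big[op/idx]_(0 <= i < k) h (iter i g x).
Proof.
elim: k => [|k IH]; first by rewrite big_nil big_geq.
by rewrite trajectSr big_rcons IH big_nat_recr.
Qed.

Lemma big_uniq_update (T : eqType) (R : zmodType) (s : seq T) (F F' : T -> R) a :
  uniq s -> a \in s -> (forall j, j != a -> F' j = F j) ->
  \sum_(j <- s) F' j = \sum_(j <- s) F j + (F' a - F a).
Proof.
move=> s_uniq a_s F'E; rewrite !(big_rem a a_s) /= [RHS]addrC addrA subrK.
congr (_ + _); rewrite !big_seq; apply: eq_bigr => j.
by rewrite mem_rem_uniq // => /andP[j_neq_a _]; exact: F'E.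
Qed.

Section CyclicPermutation.
Variables (T : eqType) (s : seq T) (g : T -> T).
Hypothesis s_uniq : uniq s.
Hypothesis g_in : forall y, y \in s -> g y \in s.
Hypothesis g_inj : {in s &, injective g}.
Hypothesis g_transitive : forall y z, y \in s -> z \in s -> exists k, iter k g y = z.

Lemma iter_cycle_mem k y : y \in s -> iter k g y \in s.
Proof. by move=> ys; elim: k => [|k IH] //=; apply: g_in. Qed.

Lemma looping_cycle y : y \in s -> looping g y (size s).
Proof.
move=> ys; rewrite -[looping _ _ _]negbK -looping_uniq; apply/negP => uniq_t.
have sub : {subset traject g y (size s).+1 <= s}.
  by move=> z /trajectP [k _ ->]; apply: iter_cycle_mem.
by have := uniq_leq_size uniq_t sub; rewrite size_traject ltnn.
Qed.

Lemma cycle_sub_traject y : y \in s -> {subset s <= traject g y (size s)}.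
Proof.
move=> ys z zs; have /loopingP loop := looping_cycle ys.
by have [k <-] := g_transitive ys zs; apply: loop.
Qed.

Lemma traject_cycle_uniq y : y \in s -> uniq (traject g y (size s)).
Proof.
move=> ys; apply: leq_size_uniq s_uniq (cycle_sub_traject ys) _.
by rewrite size_traject.
Qed.

Lemma traject_cycle_perm y : y \in s -> perm_eq (traject g y (size s)) s.
Proof.
move=> ys; apply: uniq_perm => //; first exact: traject_cycle_uniq.
have [_ eq_s] :=
  uniq_min_size s_uniq (cycle_sub_traject ys) (eq_leq (size_traject _ _ _)).
by move=> z; rewrite eq_s.
Qed.

Lemma iter_cycle_size y : y \in s -> iter (size s) g y = y.
Proof.
(* g^N y lies on the trajectory; if g^N y = g^(i+1) y with i+1 < N, cancelling
   one g gives the repetition g^(N-1) y = g^i y. *)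
move=> ys; have /trajectP [[|i] lt_i E] := looping_cycle ys; first by [].
case: (size s) lt_i E (traject_cycle_uniq ys) => // N lt_iN E uniq_t.
have E' : iter N g y = iter i g y.
  by apply: g_inj; [exact: iter_cycle_mem | exact: iter_cycle_mem | exact: E].
have := @nth_uniq _ y (traject g y N.+1) N i.
rewrite size_traject ltnSn (ltnW lt_iN) => /(_ isT isT uniq_t).
by rewrite !nth_traject ?(ltnW lt_iN) // E' eqxx gtn_eqF.
Qed.

Variable R : numFieldType.

Definition cycle_weight (h : T -> R) y :=
  - (size s)%:R^-1 * \sum_(0 <= i < size s) i%:R * h (iter i.+1 g y).

Lemma cycle_weight_step h y : y \in s ->
  cycle_weight h (g y) - cycle_weight h y =
  - h (g y) + (size s)%:R^-1 * \sum_(z <- s) h z.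
Proof.
move=> ys; have s_gt0 : (0 < size s)%N by case: (s) ys.
have sum_s : \sum_(0 <= i < size s) h (iter i.+2 g y) = \sum_(z <- s) h z.
  (* [in RHS]: [index_iota 0 k] is itself the trajectory [traject succn 0 k]. *)
  rewrite -(perm_big _ (traject_cycle_perm (g_in (g_in ys)))) [in RHS]big_traject.
  by apply: eq_bigr => i _; rewrite -!iterSr.
have h_last : h (iter (size s).+1 g y) = h (g y) by rewrite iterSr iter_cycle_size ?g_in.
have shift : \sum_(0 <= i < size s) i%:R * h (iter i.+2 g y) =
    \sum_(0 <= i < size s) i%:R * h (iter i.+1 g y) + (size s)%:R * h (g y)
    - \sum_(z <- s) h z.
  by rewrite -sum_s -h_last -(sumr_mul_index_shift (fun k => h (iter k g y))) addrK.
have W_gy : cycle_weight h (g y) =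
    - (size s)%:R^-1 * \sum_(0 <= i < size s) i%:R * h (iter i.+2 g y).
  by congr (_ * _); apply: eq_bigr => i _; rewrite [in RHS]iterSr.
by rewrite W_gy shift /cycle_weight; field; rewrite pnatr_eq0 -lt0n.
Qed.

End CyclicPermutation.

Section SimpleRandomWalk.
Variables (R : realType) (V : eqType) (nbr : V -> seq V) (o : V).
Local Notation p := (@srw_p R V nbr o).
Local Notation f := (@taboo R V nbr o).
Local Notation G := (@green R V nbr o).
Local Notation F := (fine (@return_prob R V nbr o)).

Lemma srw_p_ge0 k y : 0 <= p k y.
Proof.
elim: k y => [|k IH] y /=; first by rewrite ler0n.
by apply: sumr_ge0 => x _; rewrite divr_ge0 ?ler0n.
Qed.

Lemma taboo_ge0 k y : 0 <= f k y.
Proof.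
elim: k y => [|k IH] y /=; first by rewrite ler0n.
by apply: sumr_ge0 => x _; rewrite divr_ge0 ?ler0n.
Qed.

Lemma srw_p_first_return k y : (0 < k)%N ->
  p k y = f k y + \sum_(1 <= j < k) f j o * p (k - j) y.
Proof.
case: k => // k _; elim: k y => [|k IH] y.
  by rewrite big_geq // addr0 /=; apply: eq_bigl => x.
have -> : p k.+2 y = \sum_(x <- nbr y) p k.+1 x / (deg nbr x)%:R by [].
have -> : f k.+2 y = \sum_(x <- nbr y | x != o) f k.+1 x / (deg nbr x)%:R by [].
under eq_bigr => x _ do rewrite IH // mulrDl.
rewrite big_split (bigID (fun x => x != o)) /= -addrA; congr (_ + _).
rewrite big_nat_recr // subSnn addrC; congr (_ + _); last first.
  rewrite mulr_sumr big_mkcond; apply: eq_bigr => x _ /=.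
  by rewrite negbK; case: eqP => [->|_]; rewrite ?mul1r ?mul0r ?mulr0.
under eq_bigr => x _ do rewrite mulr_suml.
rewrite exchange_big !big_nat; apply: eq_bigr => j /andP[j_ge1 lt_jk].
rewrite (subSn (ltnW lt_jk)).
have : (0 < k.+1 - j)%N by rewrite subn_gt0.
case: (k.+1 - j)%N => // l _.
by rewrite [p l.+2 y]/= mulr_sumr; apply: eq_bigr => x _; rewrite mulrA.
Qed.

(* [taboo 0 o = 1] records the start at [o], not a return. *)
Definition first_return_prob j : R := if j is 0 then 0 else f j o.

Lemma first_return_prob_ge0 j : 0 <= first_return_prob j.
Proof. by case: j => [|j] //; exact: taboo_ge0. Qed.

Lemma srw_p_o_renewal k :
  p k o = (k == 0)%:R + \sum_(j < k.+1) first_return_prob j * p (k - j)%N o.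
Proof.
case: k => [|k]; first by rewrite big_ord_recl big_ord0 /= mul0r !addr0 eqxx.
rewrite srw_p_first_return // add0r big_ord_recr /= subnn.
rewrite [p 0 o]/= eqxx mulr1 addrC.
congr (_ + _); rewrite big_ord_recl /= mul0r add0r (big_addn 0 _ 1) subn1 big_mkord.
by apply: eq_bigr => i _; rewrite addn1.
Qed.

Hypothesis transient_G : @transient R V nbr o.

Lemma return_prob_ge0 : (0 <= @return_prob R V nbr o)%E.
Proof. by apply: nneseries_ge0 => k _ _; rewrite lee_fin taboo_ge0. Qed.

Lemma return_prob_fin_num : @return_prob R V nbr o \is a fin_num.
Proof. by rewrite ge0_fin_numE ?return_prob_ge0 ?(lt_trans transient_G) ?ltry. Qed.

Lemma alphaG_gt0 : 0 < @alphaG R V nbr o.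
Proof. by rewrite /alphaG subr_gt0 -lte_fin fineK ?return_prob_fin_num. Qed.

Lemma sum_first_return_prob_le N : \sum_(j < N) first_return_prob j <= F.
Proof.
case: N => [|N]; first by rewrite big_ord0 fine_ge0 ?return_prob_ge0.
rewrite big_ord_recl add0r.
have -> : \sum_(i < N) first_return_prob (bump 0 i) = \sum_(1 <= j < N.+1) f j o.
  by rewrite (big_addn 0 _ 1) subn1 big_mkord; apply: eq_bigr => i _; rewrite addn1.
rewrite -lee_fin fineK ?return_prob_fin_num // -sumEFin.
by apply: nneseries_lim_ge => k _ _; rewrite lee_fin taboo_ge0.
Qed.

Lemma alphaG_mul_sum_srw_p_o_le1 N : @alphaG R V nbr o * \sum_(k < N) p k o <= 1.
Proof.
have S_ge0 : 0 <= \sum_(k < N) p k o by apply: sumr_ge0 => k _; exact: srw_p_ge0.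
have := renewal_partial_sum_le N first_return_prob_ge0 (srw_p_ge0 ^~ o) srw_p_o_renewal.
have := ler_wpM2r S_ge0 (sum_first_return_prob_le N).
by rewrite /alphaG; nra.
Qed.

Hypothesis simple_G : simple_graph nbr.
Hypothesis connected_G : connected_graph nbr.

Lemma srw_p_path_le q x : path (fun a b => b \in nbr a) x q ->
  exists2 c, 0 < c & forall k, c * p k x <= p (k + size q) (last x q).
Proof.
elim: q x => [|y q IH] x /=; first by exists 1 => // k; rewrite mul1r addn0.
case/andP => y_nbr_x /IH [c c_gt0 le_c].
have deg_gt0 : (0 < deg nbr x)%N by rewrite /deg; case: (nbr x) y_nbr_x.
exists (c / (deg nbr x)%:R) => [|k]; first by rewrite divr_gt0 ?ltr0n.
rewrite -addSnnS (le_trans _ (le_c k.+1)) // -mulrA; apply: ler_wpM2l; first exact: ltW.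
have x_nbr_y : x \in nbr y by case: simple_G => _ [_ <-].
rewrite [p k.+1 y]/= mulrC (big_rem x x_nbr_y) /= lerDl.
by apply: sumr_ge0 => z _; rewrite divr_ge0 ?srw_p_ge0.
Qed.

Lemma sum_srw_p_bounded x : exists B, forall N, \sum_(k < N) p k x <= B.
Proof.
have [q [x_q_path q_last]] := connected_G x o.
have [c c_gt0 le_c] := srw_p_path_le x_q_path; rewrite q_last in le_c.
exists (@alphaG R V nbr o * c)^-1 => N.
rewrite -[_^-1]mulr1 ler_pdivlMl ?mulr_gt0 ?alphaG_gt0 // -mulrA.
apply: le_trans (alphaG_mul_sum_srw_p_o_le1 (size q + N)).
apply: ler_wpM2l; first exact/ltW/alphaG_gt0.
rewrite mulr_sumr big_split_ord /= -[X in X <= _]add0r lerD //.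
  by apply: sumr_ge0 => k _; exact: srw_p_ge0.
by apply: ler_sum => k _; rewrite addnC.
Qed.

Lemma green_EFin x : (G x)%:E = (\sum_(0 <= k <oo) (p k x)%:E)%E.
Proof.
have [B le_B] := sum_srw_p_bounded x.
by rewrite fineK // (nneseries_bounded_fin_num (srw_p_ge0 ^~ x) le_B).
Qed.

Lemma green_ge0 x : 0 <= G x.
Proof.
by rewrite -lee_fin green_EFin nneseries_ge0 // => k _ _; rewrite lee_fin srw_p_ge0.
Qed.

Lemma alphaG_mul_green_o_le1 : @alphaG R V nbr o * G o <= 1.
Proof.
rewrite mulrC -ler_pdivlMr ?alphaG_gt0 // mul1r -lee_fin green_EFin.
apply: nneseries_le_bound => [k|N]; first exact: srw_p_ge0.
by rewrite -[_^-1]mulr1 ler_pdivlMl ?alphaG_gt0 ?alphaG_mul_sum_srw_p_o_le1.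
Qed.

Lemma green_harmonic x : G x = (x == o)%:R + \sum_(y <- nbr x) G y / (deg nbr y)%:R.
Proof.
have p_ge0 k y : (0 <= (p k y)%:E)%E by rewrite lee_fin srw_p_ge0.
apply: EFin_inj; rewrite green_EFin EFinD nneseries_recl //; congr (_ + _)%E.
rewrite -nneseries_addn //.
under eq_eseriesr => k _ do rewrite addn1 /= -sumEFin.
rewrite nneseries_sum; last by move=> y k _; rewrite lee_fin divr_ge0 ?srw_p_ge0.
rewrite -sumEFin; apply: eq_bigr => y _.
under eq_eseriesr => k _ do rewrite mulrC EFinM.
by rewrite nneseriesZl // -green_EFin -EFinM mulrC.
Qed.

End SimpleRandomWalk.

Section RotorWalk.
Variables (V : eqType) (nbr : V -> seq V) (o : V).
Variables (m : V -> V -> V) (rho : V -> V) (n : nat).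
Hypothesis mechanism_m : rotor_mechanism nbr m.
Hypothesis config_rho : rotor_config nbr rho.
Hypothesis n_gt0 : (0 < n)%N.

Local Notation rotors t := (run o m rho n t).1.
Local Notation hist t := (run o m rho n t).2.
Local Notation pos t := (head (fun _ => o) (hist t)).

Definition turn t := (t.+1 %% n)%N.
Definition advances t := ~~ returned o (hist t) (turn t).
Definition site t := pos t (turn t).

Lemma runS t : run o m rho n t.+1 =
  if returned o (hist t) (turn t) then (rotors t, pos t :: hist t)
  else let x := pos t (turn t) in
       let r' := fun z => if z == x then m x (rotors t x) else rotors t z in
       (r', (fun j => if j == turn t then r' x else pos t j) :: hist t).
Proof. by rewrite /=; case: (run o m rho n t). Qed.

Lemma rotorsS t : rotors t.+1 =
  if advances t then
    fun z => if z == site t then m (site t) (rotors t (site t)) else rotors t z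
  else rotors t.
Proof. by rewrite runS /advances /site; case: ifP. Qed.

Lemma posS t : pos t.+1 =
  if advances t then
    fun j => if j == turn t then m (site t) (rotors t (site t)) else pos t j
  else pos t.
Proof. by rewrite runS /advances /site; case: ifP => //= _; rewrite eqxx. Qed.

Lemma histS t : hist t.+1 = pos t.+1 :: hist t.
Proof. by rewrite runS; case: ifP. Qed.

Lemma rotors_config t : rotor_config nbr (rotors t).
Proof.
elim: t => [|t IH] z; first exact: config_rho.
rewrite rotorsS; case: ifP => // _; case: eqP => [->|_] //.
by have [m_in _] := mechanism_m (site t); exact: m_in.
Qed.

Lemma turn_lt t : (turn t < n)%N.
Proof. by rewrite ltn_pmod. Qed.

Lemma hist_early t : (t < n)%N -> forall j, ~~ (0 < j <= t)%N ->
  all (fun X => X j == o) (hist t).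
Proof.
elim: t => [|t IH] lt_tn j j_out; first by rewrite /= eqxx.
have j_out' : ~~ (0 < j <= t)%N by apply: contra j_out => /andP[-> /leqW].
have all_h := IH (ltnW lt_tn) j j_out'.
have X_j : pos t j == o.
  by case: (hist t) all_h => [|X h] /=; [rewrite eqxx | case/andP].
rewrite histS /= all_h andbT posS.
case: ifP => // _; have [j_turn|//] := eqVneq j (turn t).
by move: j_out; rewrite j_turn /turn modn_small // leqnn andbT.
Qed.

Lemma advances_early t : (t < n)%N -> advances t /\ site t = o.
Proof.
move=> lt_tn.
have turn_out : ~~ (0 < turn t <= t)%N.
  rewrite /turn; case: (ltngtP t.+1 n) => [lt_t1n||->]; last by rewrite modnn.
  - by rewrite modn_small // ltnn andbF.
  - by rewrite ltnNge lt_tn.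
have all_o := hist_early lt_tn turn_out.
have site_o : site t == o.
  by move: all_o; rewrite /site; case: (hist t) => //= X h /andP[].
split; last exact/eqP.
rewrite /advances /returned negb_and orbC; apply/orP; left.
have all_o' : all (fun X => X (turn t) == o) (behead (hist t)).
  by case: (hist t) all_o => //= X h /andP[_].
by rewrite -all_predC; apply: sub_all all_o' => X /=; rewrite negbK.
Qed.

Variable R : realType.
Hypothesis simple_G : simple_graph nbr.
Hypothesis connected_G : connected_graph nbr.
Hypothesis transient_G : @transient R V nbr o.

Local Notation G := (@green R V nbr o).
Local Notation W := (@weight R V nbr o m).

Definition green_deg x : R := G x / (deg nbr x)%:R.

Lemma green_deg_ge0 x : 0 <= green_deg x.
Proof. by rewrite divr_ge0 ?ler0n ?green_ge0. Qed.

Lemma weight_rotor_step x y : y \in nbr x ->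
  green_deg (m x y) - green_deg x + (W x (m x y) - W x y) =
  - ((x == o)%:R / (deg nbr x)%:R).
Proof.
move=> y_x; have [m_in [m_inj m_tr]] := mechanism_m x.
have nbr_uniq : uniq (nbr x) by case: simple_G.
have deg_gt0 : (0 < deg nbr x)%N by rewrite /deg; case: (nbr x) y_x.
have W_step : W x (m x y) - W x y =
    - green_deg (m x y) + (deg nbr x)%:R^-1 * \sum_(z <- nbr x) green_deg z :=
  cycle_weight_step nbr_uniq m_in m_inj m_tr green_deg y_x.
rewrite W_step addrA (addrAC (green_deg _)) subrr add0r.
rewrite /green_deg (green_harmonic transient_G simple_G connected_G x).
by field; rewrite pnatr_eq0 -lt0n.
Qed.

(* [S] is a finite set of vertices containing every site whose rotor has turned;
   the weight terms vanish outside it. *)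
Definition potential (S : seq V) t :=
  \sum_(j <- iota 0 n) green_deg (pos t j) +
  \sum_(z <- S) (W z (rotors t z) - W z (rho z)).

Lemma potentialS S t : uniq S -> (advances t -> site t \in S) ->
  potential S t.+1 =
  potential S t - (advances t && (site t == o))%:R / (deg nbr o)%:R.
Proof.
move=> S_uniq site_S; rewrite /potential.
have [adv|not_adv] := boolP (advances t); last first.
  by rewrite posS rotorsS (negbTE not_adv) mul0r subr0.
rewrite (big_uniq_update (F := fun j => green_deg (pos t j)) (a := turn t));
  last 3 first.
- exact: iota_uniq.
- by rewrite mem_iota add0n turn_lt.
- by move=> j /negbTE j_turn; rewrite posS adv j_turn.
rewrite (big_uniq_update (F := fun z => W z (rotors t z) - W z (rho z)) (a := site t));
  last 3 first.
- exact: S_uniq.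
- exact: site_S.
- by move=> z /negbTE z_site; rewrite rotorsS adv z_site.
rewrite posS rotorsS adv /= !eqxx.
have := weight_rotor_step (rotors_config t (site t)).
have -> : (site t == o)%:R / (deg nbr (site t))%:R =
    (site t == o)%:R / (deg nbr o)%:R :> R.
  by case: eqP => [->|_]; rewrite ?mul0r.
rewrite /site; lra.
Qed.

Lemma potential_le S t : uniq S ->
  (forall s, (s < t)%N -> advances s -> site s \in S) ->
  potential S t <= n%:R * green_deg o - (minn t n)%:R / (deg nbr o)%:R.
Proof.
move=> S_uniq; elim: t => [|t IH] site_S.
  rewrite /potential /= [X in _ + X]big1 => [|z _]; last by rewrite subrr.
  have -> : iota 0 n = index_iota 0 n by rewrite /index_iota subn0.
  by rewrite sumr_const_nat subn0 min0n mul0r subr0 addr0 mulr_natl.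
have IH' := IH (fun s lt_st => site_S s (ltnW lt_st)).
rewrite potentialS // => [|adv]; last exact: site_S.
case: (ltnP t n) => [lt_tn|le_nt].
  have [-> ->] := advances_early lt_tn.
  have -> : minn t.+1 n = t.+1 by apply/minn_idPl.
  have min_t : minn t n = t by apply/minn_idPl/ltnW.
  by move: IH'; rewrite min_t eqxx -natr1 mulrDl mul1r; lra.
have -> : minn t.+1 n = n by apply/minn_idPr/leqW.
have min_t : minn t n = n by apply/minn_idPr.
have : 0 <= (advances t && (site t == o))%:R / (deg nbr o)%:R :> R.
  by rewrite divr_ge0 ?ler0n.
by move: IH'; rewrite min_t; lra.
Qed.

Lemma count_returned_le_potential S t :
  (forall x y, y \in nbr x -> W x (rho x) <= W x y) ->
  (count (returned o (hist t)) (iota 0 n))%:R * green_deg o <= potential S t.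
Proof.
move=> rho_min; rewrite /potential -[X in X <= _]addr0 lerD //; last first.
  by apply: sumr_ge0 => z _; rewrite subr_ge0 rho_min ?rotors_config.
elim: (iota 0 n) => [|j s IH]; first by rewrite big_nil mul0r.
rewrite big_cons /= natrD mulrDl lerD //.
have [/andP[/eqP -> _]|_] := boolP (returned o (hist t) j); first by rewrite mul1r.
by rewrite mul0r green_deg_ge0.
Qed.

Lemma n_le_I_t_mul_green_o t :
  (forall x y, y \in nbr x -> W x (rho x) <= W x y) -> (n <= t)%N ->
  n%:R <= (I_t o m rho n t)%:R * G o.
Proof.
move=> rho_min le_nt.
set S := undup [seq site s | s <- iota 0 t].
have site_S s : (s < t)%N -> advances s -> site s \in S.
  by move=> lt_st _; rewrite mem_undup map_f // mem_iota.
have up := potential_le (undup_uniq _) site_S.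
have low := count_returned_le_potential S t rho_min.
have n_split : n%:R =
    (count (returned o (hist t)) (iota 0 n))%:R + (I_t o m rho n t)%:R :> R.
  by rewrite -natrD count_predC size_iota.
have deg_gt0 : (0 < deg nbr o)%N by rewrite /deg; case: (nbr o) (config_rho o).
rewrite (_ : minn t n = n) in up; last exact/minn_idPr.
have : n%:R / (deg nbr o)%:R <= (I_t o m rho n t)%:R * (G o / (deg nbr o)%:R).
  by move: (le_trans low up); rewrite /green_deg {1}n_split mulrDl; lra.
by rewrite mulrA ler_pM2r ?invr_gt0 ?ltr0n.
Qed.

End RotorWalk.

Theorem proposition2p2 (R : realType) (V : eqType) (nbr : V -> seq V) (o : V)
  (m : V -> V -> V) (rho_min : V -> V) (n t : nat) :
  simple_graph nbr ->
  connected_graph nbr ->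
  @transient R V nbr o ->
  rotor_mechanism nbr m ->
  rotor_config nbr rho_min ->
  (forall x y, y \in nbr x ->
     @weight R V nbr o m x (rho_min x) <= @weight R V nbr o m x y) ->
  (1 <= n)%N -> (n <= t)%N ->
  @alphaG R V nbr o <= (I_t o m rho_min n t)%:R / n%:R.
Proof.
move=> simple_G connected_G transient_G mechanism_m config_rho min_rho n_gt0 le_nt.
have n_le := n_le_I_t_mul_green_o mechanism_m config_rho n_gt0 simple_G connected_G
  transient_G min_rho le_nt.
have alpha_ge0 := ltW (alphaG_gt0 transient_G).
rewrite ler_pdivlMr ?ltr0n // (le_trans (ler_wpM2l alpha_ge0 n_le)) // mulrCA.
by rewrite ler_piMr ?ler0n // alphaG_mul_green_o_le1.
Qed.
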